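(* Let $w$ be a word and let $v$ be an explicit node of the Cover Suffix Tree $\mathit{CST}(w)$ other than the root, and let $v_1,v_2,\ldots,v_k$ be the consecutive implicit nodes on the edge from $v$ to its explicit parent, ordered so that $|v_i|=|v|-i$. Then for $1\le i\le k$, $$\c(v_i)=\c(v)-i\,\Delta(v);$$ in particular $(\c(v_i))_{i=1}^k$ is an arithmetic progression.
   Context: Positions of $w$ are $1,\ldots,n$. The suffix trie of $w$ has one node for each factor of $w$ (the root for the empty word), the parent of the node of $ua$ ($a$ a letter) being the node of $u$; for a node $v$, $\hat v$ denotes the corresponding factor and $|v|=|\hat v|$. In the suffix tree of $w$, the explicit nodes are the root, the nodes with at least two children, and the nodes corresponding to suffixes of $w$; all other nodes are implicit, and each edge is a maximal upward path of implicit nodes between an explicit node and its nearest explicit proper ancestor (its explicit parent). $\mathit{CST}(w)$ is obtained by additionally making explicit every node $v$ (an extra node) such that $\hat v\hat v$ is a factor of $w$ with $\hat v$ primitive (a word $u$ is primitive if $u=y^k$ implies $y=u$). $\mathit{Occ}(v,w)$ is the set of starting positions of occurrences of $\hat v$ in $w$; for a set $X$ of integers, $\mathrm{next}_X(x)=\min\{y\in X:y>x\}$ (or $\infty$ if $x=\max X$), and $\delta(i,v)=\mathrm{next}_{\mathit{Occ}(v,w)}(i)-i$ for $i\in \mathit{Occ}(v,w)$. $\mathit{Covered}(u,w)$ is the number of positions of $w$ lying within some occurrence of $u$. Finally $\c(v)=\mathit{Covered}(\hat v,w)$ and $\Delta(v)=|\{i\in\mathit{Occ}(v,w):\delta(i,v)\ge|v|\}|$.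 *)

From mathcomp Require Import all_boot all_algebra.
Set Implicit Arguments. Unset Strict Implicit. Unset Printing Implicit Defensive.

Section Words.
Variable A : eqType.
Implicit Types (u w : seq A).

(* Positions of w are 1..n; u occurs at position i (1-based). *)
Definition occurs_at u w (i : nat) : bool :=
  [&& 1 <= i, i + size u <= (size w).+1 & take (size u) (drop i.-1 w) == u].

Definition Occ u w : seq nat := [seq i <- iota 1 (size w) | occurs_at u w i].

(* next_X(x) = min {y in X : y > x}; None encodes infinity. *)
Definition next_in (X : seq nat) (x : nat) : option nat :=
  let Y := [seq y <- X | x < y] in
  if Y is y0 :: _ then Some (foldr minn y0 Y) else None.

Definition delta u w (i : nat) : option nat :=
  omap (fun y => y - i) (next_in (Occ u w) i).

Definition Delta u w : nat :=
  count (fun i => if delta u w i is Some d then size u <= d else true) (Occ u w).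

Definition covered u w : nat :=
  count (fun p => has (fun i => (i <= p) && (p < i + size u)) (Occ u w))
        (iota 1 (size w)).

Definition primitive u : Prop :=
  forall (y : seq A) (k : nat), u = flatten (nseq k y) -> y = u.

(* Explicit nodes of CST(w) (for a factor u of w): root, branching nodes
   (at least two children ua, ub), suffixes of w, and extra nodes
   (uu factor of w with u primitive). *)
Definition cst_explicit w u : Prop :=
  [\/ u = [::],
      exists a b : A, [/\ a != b, infix (rcons u a) w & infix (rcons u b) w],
      suffix u w
    | infix (u ++ u) w /\ primitive u].

End Words.

(** Along the edge every implicit node [v_i] has the same occurrences as [v]: an
    implicit node [u] has a unique right extension [ua] and is not a suffix, so
    [u] and [ua] occur at the same positions.  Hence [Covered(v_i)] counts the
    positions covered by windows of length [|v| - i] starting at the fixed set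
    [X = Occ(v)].  Lengthening every window by one adds exactly one position for
    each [x \in X] with no other occurrence in [(x, x + L)], so it suffices that
    this count does not depend on [L] along the edge.  It could only change if
    two consecutive occurrences [x < z] had a gap [d = z - x] strictly inside
    the edge; but then [w] has period [d] on [w[x .. z + |v|)], so the prefix of
    [v] of length [d] is primitive and its square is a factor of [w]: an extra
    node of CST(w) on the edge, which is excluded. *)
From mathcomp Require Import all_boot all_algebra.
From mathcomp Require Import zify.
Set Implicit Arguments. Unset Strict Implicit. Unset Printing Implicit Defensive.

Section Occurrences.
Variables (A : eqType) (a0 : A).
Implicit Types (u v w : seq A).

Lemma occurs_atP u w i :
  reflect [/\ 0 < i, i + size u <= (size w).+1 &
           forall j, j < size u -> nth a0 w (i.-1 + j) = nth a0 u j]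
          (occurs_at u w i).
Proof.
apply: (iffP and3P) => [[i_gt0 i_le /eqP uE] | [i_gt0 i_le uE]].
  by split=> // j lt_j; rewrite -[in RHS]uE nth_take // nth_drop.
split=> //; apply/eqP/(@eq_from_nth _ a0) => [|j].
  by rewrite size_takel // size_drop; lia.
rewrite size_takel ?size_drop; last lia.
by move=> lt_j; rewrite nth_take // nth_drop uE.
Qed.

Lemma occurs_at_cat u w i : occurs_at u w i ->
  w = take i.-1 w ++ u ++ drop (i.-1 + size u) w.
Proof.
by case/and3P => _ _ /eqP uE; rewrite addnC -drop_drop -{1}uE !cat_take_drop.
Qed.

Lemma occurs_at_infix u w i : occurs_at u w i -> infix u w.
Proof. by move/occurs_at_cat ->; apply: infix_infix. Qed.

Lemma mem_Occ u w i : (i \in Occ u w) = (i \in iota 1 (size w)) && occurs_at u w i.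
Proof. by rewrite mem_filter andbC. Qed.

Lemma Occ_bound u w x : x \in Occ u w -> 0 < x /\ x + size u <= (size w).+1.
Proof. by rewrite mem_filter => /andP[/and3P[]]. Qed.

Lemma nth_flatten_nseq (y : seq A) m j : j < m * size y ->
  nth a0 (flatten (nseq m y)) j = nth a0 y (j %% size y).
Proof.
elim: m j => [|m IH] j; first by rewrite mul0n.
rewrite mulSn /= nth_cat => lt_j; case: ltnP => le_y; first by rewrite modn_small.
rewrite IH; last lia.
by rewrite -[in RHS](subnK le_y) modnDr.
Qed.

Lemma size_flatten_nseq (y : seq A) m : size (flatten (nseq m y)) = m * size y.
Proof. by elim: m => //= m IH; rewrite size_cat IH mulSn. Qed.

Lemma nth_overlap v w x d : 0 < d <= size v ->
  occurs_at v w x -> occurs_at v w (x + d) ->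
  forall j, j < size v + d -> nth a0 w (x.-1 + j) = nth a0 v (j %% d).
Proof.
case/andP=> d_gt0 d_le /occurs_atP[x_gt0 _ vx] /occurs_atP[_ _ vxd].
elim/ltn_ind=> j IH lt_j; case: (ltnP j d) => [lt_jd | le_dj].
  by rewrite modn_small // vx //; lia.
have -> : x.-1 + j = (x + d).-1 + (j - d) by lia.
rewrite vxd; last lia.
rewrite -vx; last lia.
by rewrite IH; [rewrite -[in RHS](subnK le_dj) modnDr | lia | lia].
Qed.

Lemma overlap_square_primitive v w x d : 0 < d < size v ->
  occurs_at v w x -> occurs_at v w (x + d) ->
  (forall z, x < z < x + d -> ~~ occurs_at v w z) ->
  infix (take d v ++ take d v) w /\ primitive (take d v).
Proof.
move=> /andP[d_gt0 lt_dv] vx vxd no_between.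
have [x_gt0 x_le v_at_x] := occurs_atP _ _ _ vx.
have [_ xd_le _] := occurs_atP _ _ _ vxd.
set u := take d v; have size_u : size u = d by rewrite size_takel // ltnW.
have periodic j : j < size v + d -> nth a0 w (x.-1 + j) = nth a0 u (j %% d).
  move=> lt_j; rewrite (nth_overlap _ vx vxd) ?d_gt0 ?(ltnW lt_dv) //.
  by rewrite nth_take ?ltn_pmod.
split.
  apply: (@occurs_at_infix _ _ x); apply/occurs_atP; rewrite size_cat size_u.
  split=> [||j lt_j]; [by [] | lia |].
  rewrite nth_cat size_u periodic; last lia.
  case: ltnP => [lt_jd | le_dj]; first by rewrite modn_small.
  by rewrite -{1}(subnK le_dj) modnDr modn_small //; lia.
move=> y [|[|m]] uE; first by move: size_u; rewrite uE /=; lia.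
  by rewrite uE /= cats0.
(* A proper period [|y|] of [u] would give an occurrence of [v] at [x + |y|]. *)
have d_mul : d = m.+2 * size y by rewrite -size_u uE size_flatten_nseq.
have periodic_y j : j < size v + d -> nth a0 w (x.-1 + j) = nth a0 y (j %% size y).
  move=> lt_j; rewrite periodic // uE nth_flatten_nseq -?d_mul ?ltn_pmod //.
  by rewrite modn_dvdm // d_mul dvdn_mull.
have between : x < x + size y < x + d by nia.
have/negP[] := no_between _ between.
apply/occurs_atP; split=> [||j lt_j]; [lia | nia |].
have -> : (x + size y).-1 + j = x.-1 + (size y + j) by lia.
rewrite periodic_y; last nia.
by rewrite modnDl -periodic_y ?v_at_x //; lia.
Qed.

Lemma Occ_rcons_implicit u a w : infix (rcons u a) w -> ~ cst_explicit w u ->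
  Occ u w = Occ (rcons u a) w.
Proof.
move=> ua_infix u_implicit; apply: eq_filter => p; apply/idP/idP; last first.
  case/occurs_atP; rewrite size_rcons => p_gt0 p_le ua_at_p.
  apply/occurs_atP; split=> [||j lt_j]; [by [] | lia |].
  by move: (ua_at_p j); rewrite nth_rcons lt_j; apply; lia.
move=> u_at_p; have [p_gt0 p_le u_at] := occurs_atP _ _ _ u_at_p.
have p_lt : p + size u <= size w.
  rewrite leqNgt; apply/negP => p_gt; apply: u_implicit; apply: Or43.
  rewrite (occurs_at_cat u_at_p) drop_oversize ?cats0; last lia.
  exact: suffix_suffix.
set b := nth a0 w (p.-1 + size u).
have ub_at_p : occurs_at (rcons u b) w p.
  apply/occurs_atP; rewrite size_rcons; split=> [||j lt_j]; [by [] | lia |].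
  rewrite nth_rcons; case: ltnP => [/u_at // | le_uj].
  have -> : j = size u by lia.
  by rewrite eqxx.
have -> : a = b.
  apply/eqP/negPn/negP => neq_ab; apply: u_implicit; apply: Or42.
  by exists a, b; split=> //; apply: occurs_at_infix ub_at_p.
exact: ub_at_p.
Qed.

End Occurrences.

Definition window_cover (X : seq nat) L n : nat :=
  count (fun p => has (fun x => x <= p < x + L) X) (iota 1 n).

Definition count_isolated (X : seq nat) L : nat :=
  count (fun x => all (fun y => ~~ (x < y < x + L)) X) X.

Lemma covered_window (A : eqType) (u w : seq A) :
  covered u w = window_cover (Occ u w) (size u) (size w).
Proof. by []. Qed.

(* Lengthening the windows by one newly covers exactly the positions [x + L]
   with [x] isolated, and distinct [x] give distinct positions. *)
Lemma window_coverS X L n : uniq X -> (forall x, x \in X -> 0 < x /\ x + L <= n) ->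
  window_cover X L.+1 n = window_cover X L n + count_isolated X L.+1.
Proof.
move=> uniq_X X_bound.
rewrite /window_cover -size_filter.
rewrite -(count_predC (fun p => has (fun x => x <= p < x + L) X)) !count_filter.
congr (_ + _).
  apply: eq_count => p /=; apply/andP/idP => [[//] | /hasP[x xX /andP[le_xp lt_p]]].
  by split; apply/hasP; exists x => //; apply/andP; split; lia.
rewrite /count_isolated -!size_filter -[in RHS](size_map (addn^~ L)).
apply/perm_size/uniq_perm.
- by rewrite filter_uniq ?iota_uniq.
- by rewrite map_inj_uniq ?filter_uniq //; apply: addIn.
move=> p; rewrite !mem_filter mem_iota /=; apply/idP/mapP => [|[x]].
  case/and3P=> /andP[/negP not_cov /hasP[x xX /andP[le_xp lt_p]]] _ _.
  have p_eq : p = x + L.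
    case: (ltnP p (x + L)) => [lt_xL | ?]; last lia.
    by case: not_cov; apply/hasP; exists x => //; rewrite le_xp.
  exists x => //; rewrite mem_filter xX andbT; apply/allP => y yX.
  apply/negP => /andP[lt_xy lt_y]; apply: not_cov; apply/hasP; exists y => //.
  by apply/andP; split; lia.
rewrite mem_filter => /andP[/allP isolated_x xX] ->.
have [x_gt0 xL_le] := X_bound x xX.
apply/and3P; split; [apply/andP; split | lia | lia].
  apply/hasP => -[y yX /andP[le_y lt_y]].
  by have /negP[] := isolated_x y yX; apply/andP; split; lia.
by apply/hasP; exists x => //; apply/andP; split; lia.
Qed.

Lemma le_foldr_minn z y0 (s : seq nat) :
  (z <= foldr minn y0 s) = (z <= y0) && all (leq z) s.
Proof. by elim: s => [|y s IH] /=; rewrite ?andbT // leq_min IH andbCA. Qed.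

Lemma next_in_gap_ge (X : seq nat) x L :
  (if omap (fun y => y - x) (next_in X x) is Some d then L <= d else true)
  = all (fun y => ~~ (x < y < x + L)) X.
Proof.
have -> : all (fun y => ~~ (x < y < x + L)) X = all (leq (x + L)) [seq y <- X | x < y].
  by rewrite all_filter; apply: eq_all => y /=; rewrite negb_and -!leqNgt; case: leqP.
rewrite /next_in; case X_gt: [seq y <- X | x < y] => [|y0 s] //=.
have /= /andP[x_lt_y0 x_lt_s] : all (leq x.+1) (y0 :: s) by rewrite -X_gt filter_all.
rewrite leq_subRL; last first.
  rewrite leq_min le_foldr_minn ltnW //=; apply/allP => y ys.
  exact/ltnW/(allP x_lt_s).
by rewrite leq_min le_foldr_minn andbA andbb.
Qed.

Lemma Delta_isolated (A : eqType) (u w : seq A) :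
  Delta u w = count_isolated (Occ u w) (size u).
Proof. by apply: eq_count => x; rewrite -next_in_gap_ge. Qed.

Section ImplicitEdge.
Variables (A : eqType) (w v : seq A) (k : nat).
Hypothesis v_infix : infix v w.
Hypothesis v_nonempty : v <> [::].
Hypothesis edge_implicit :
  forall j, 1 <= j <= k -> ~ cst_explicit w (take (size v - j) v).

Let a0 : A. Proof. by case: v v_nonempty. Qed.

(* The root, [take 0 v], is explicit. *)
Lemma edge_lt_size : k < size v.
Proof.
rewrite ltnNge; apply/negP => v_le_k; apply: (edge_implicit (j := size v)).
  by case: v v_nonempty v_le_k.
by rewrite subnn take0; apply: Or41.
Qed.

Lemma Occ_edge j : j <= k -> Occ (take (size v - j) v) w = Occ v w.
Proof.
elim: j => [|j IH] le_jk; first by rewrite subn0 take_size.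
have lt_kv := edge_lt_size.
have take_succ : take (size v - j) v
                 = rcons (take (size v - j.+1) v) (nth a0 v (size v - j.+1)).
  by rewrite -take_nth; [congr take; lia | lia].
rewrite -IH ?(ltnW le_jk) // take_succ -(Occ_rcons_implicit a0) //.
- by rewrite -take_succ (prefix_infix_trans (prefix_take _ _) v_infix).
- by apply: edge_implicit; rewrite le_jk.
Qed.

(* A gap [d] between consecutive occurrences with [size v - k <= d < size v]
   would make [take d v] an extra node inside the edge. *)
Lemma count_isolated_edge L : size v - k <= L < size v ->
  count_isolated (Occ v w) L.+1 = count_isolated (Occ v w) (size v).
Proof.
case/andP=> le_L lt_Lv; apply: eq_in_count => x xX /=.
apply/idP/idP => [isolated_x | /allP isolated_x]; last first.
  apply/allP => y yX; apply: contra (isolated_x y yX) => /andP[lt_xy lt_y].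
  by apply/andP; split; lia.
apply/allP => y yX; apply/negP => /andP[lt_xy lt_y].
have later_occ : exists z, (z \in Occ v w) && (x < z) by exists y; rewrite yX.
have [z /andP[zX lt_xz] z_min] := ex_minnP later_occ.
have le_zy : z <= y by apply: z_min; rewrite yX lt_xy.
have le_z : x + L.+1 <= z.
  by move/allP: isolated_x => /(_ z zX); rewrite lt_xz /= -leqNgt.
have occ_X i : i \in Occ v w -> occurs_at v w i by rewrite mem_Occ => /andP[].
have square_primitive :
    infix (take (z - x) v ++ take (z - x) v) w /\ primitive (take (z - x) v).
  apply: (overlap_square_primitive a0 (x := x)); first lia.
  - exact: occ_X.
  - by rewrite subnKC; [apply: occ_X | apply: ltnW].
  move=> z' /andP[lt_xz' lt_z']; apply/negP => occ_z'.
  have [z'_gt0 z'_le _] := occurs_atP a0 _ _ _ occ_z'.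
  have := z_min z'; rewrite mem_Occ occ_z' mem_iota andbT /=.
  have := Occ_bound xX; lia.
apply: (edge_implicit (j := size v - (z - x))); first lia.
by rewrite subKn; [apply: Or44 | lia].
Qed.

Lemma covered_edge t : t <= k ->
  covered v w = covered (take (size v - t) v) w + t * Delta v w.
Proof.
move=> le_tk; rewrite !covered_window Occ_edge // size_takel ?leq_subr //.
rewrite Delta_isolated; have lt_kv := edge_lt_size.
elim: t le_tk => [|t IH] le_tk; first by rewrite subn0 addn0.
rewrite IH ?(ltnW le_tk) //.
have -> : size v - t = (size v - t.+1).+1 by lia.
rewrite window_coverS; first by rewrite count_isolated_edge ?mulSn ?addnA //; lia.
  by rewrite filter_uniq ?iota_uniq.
by move=> x /Occ_bound; lia.
Qed.
End ImplicitEdge.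

Local Open Scope ring_scope.

Theorem lemma1 (A : eqType) (w v : seq A) (k : nat) :
  infix v w -> v <> [::] -> cst_explicit w v ->
  (forall j : nat, (1 <= j <= k)%N -> ~ cst_explicit w (take (size v - j) v)) ->
  forall i : nat, (1 <= i <= k)%N ->
    (covered (take (size v - i) v) w)%:Z
      = (covered v w)%:Z - (i * Delta v w)%:Z.
Proof.
move=> v_infix v_nonempty _ edge_implicit i /andP[_ le_ik].
by rewrite (covered_edge v_infix v_nonempty edge_implicit le_ik) PoszD GRing.addrK.
Qed.
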